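(* Let $\check p>0$, $\check\alpha>0$, $\gamma\ge0$. For every fixed $x>0$, as $T\uparrow\infty$: (1) $\epsilon_v(x,T)\to0$ and $\epsilon_u(x,T)\to0$; (2) $\bar v(x,T)\to v(x)$ and $\tilde v(x,T)\to v(x)$; (3) $\bar u(x,T)\to u(x)$ and $\tilde u(x,T)\to u(x)$.
   Context: Let $X$ be a spectrally negative Lévy process (no positive jumps, not the negative of a subordinator, Lévy measure without atoms), $\mathbb P^x$ the law with $X_0=x$, $\mathbb E^x$ its expectation, $\mathbb F$ the filtration generated by $X$; $r>0$ fixed with $\log\mathbb E^0[e^{X_1}]=r$. Let $\theta:=\inf\{t\ge0:X_t\le0\}$ ($\inf\emptyset=\infty$, $e^{-r\infty}=0$). $\mathcal S$ is the set of $\mathbb F$-stopping times $\tau\le\theta$ a.s., and $\mathcal S_T$ the set with $\tau\le\theta\wedge T$ a.s. Define $v(x):=\sup_{\tau\in\mathcal S}\mathbb E^x\big[\mathbf 1_{\{\tau<\infty\}}\big(\int_\tau^\theta e^{-rt}\check p\,dt-e^{-r\tau}\gamma\mathbf 1_{\{\tau<\theta\}}-e^{-r\theta}\check\alpha\mathbf 1_{\{\tau<\theta\}}\big)\big]$, $u(x):=\sup_{\tau\in\mathcal S}\mathbb E^x\big[\mathbf 1_{\{\tau<\infty\}}\big(-\int_\tau^\theta e^{-rt}\check p\,dt-e^{-r\tau}\gamma\mathbf 1_{\{\tau<\theta\}}+e^{-r\theta}\check\alpha\mathbf 1_{\{\tau<\theta\}}\big)\big]$, $\bar v(x,T):=\sup_{\tau\in\mathcal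 S_T}\mathbb E^x\big[\int_\tau^{\theta\wedge T}e^{-rt}\check p\,dt-e^{-r\tau}\gamma\mathbf 1_{\{\tau<\theta\wedge T\}}-e^{-r\theta}\check\alpha\mathbf 1_{\{\tau<\theta<T\}}\big]$, $\bar u(x,T):=\sup_{\tau\in\mathcal S_T}\mathbb E^x\big[-\int_\tau^{\theta\wedge T}e^{-rt}\check p\,dt-e^{-r\tau}\gamma\mathbf 1_{\{\tau<\theta\wedge T\}}+e^{-r\theta}\check\alpha\mathbf 1_{\{\tau<\theta<T\}}\big]$, $\tilde v(x,T):=v(x)-\mathbb E^x[\mathbf 1_{\{\theta\ge T\}}\int_T^\theta e^{-rt}\check p\,dt]$, $\tilde u(x,T):=u(x)+\mathbb E^x[\mathbf 1_{\{\theta\ge T\}}\int_T^\theta e^{-rt}\check p\,dt]$, $\epsilon_v(x,T):=\bar v(x,T)-\tilde v(x,T)$ and $\epsilon_u(x,T):=\bar u(x,T)-\tilde u(x,T)$. *)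

From HB Require Import structures.
From mathcomp Require Import all_boot all_order all_algebra.
From mathcomp Require Import all_classical all_reals all_analysis.
Set Implicit Arguments. Unset Strict Implicit. Unset Printing Implicit Defensive.
Import Order.TTheory GRing.Theory Num.Theory.
Import numFieldNormedType.Exports.
Local Open Scope classical_set_scope.
Local Open Scope ring_scope.
Local Open Scope ereal_scope.

Section Defs.
Context {R : realType} {d : measure_display} {Omega : measurableType d}.
Variable (P : probability Omega R) (X : R -> Omega -> R).

Definition jump (t : R) (w : Omega) : R :=
  (X t w - lim ((fun s => X s w) @ t^'-))%R.

Definition levy_measure (A : set R) : \bar R :=
  \int[P]_w counting [set t : R | (0 < t <= 1)%R /\ A (jump t w)].

Definition levy_process : Prop :=
  [/\ (forall t, (0 <= t)%R -> measurable_fun setT (X t)),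
      (forall w, X 0 w = 0%R),
      (forall w t, (0 <= t)%R -> (fun s => X s w) @ t^'+ --> X t w),
      (forall w t, (0 < t)%R -> cvg ((fun s => X s w) @ t^'-)) &
      (forall s t (B : set R), (0 <= s <= t)%R -> measurable B ->
         P [set w | B (X t w - X s w)%R] = P [set w | B (X (t - s) w)]) /\
      (forall (n : nat) (t : nat -> R) (B : nat -> set R),
         (0 <= t 0%N)%R -> (forall i, (i < n)%N -> (t i <= t i.+1)%R) ->
         (forall i, measurable (B i)) ->
         P (\bigcap_(i in `I_n) [set w | B i (X (t i.+1) w - X (t i) w)%R]) =
         \prod_(i < n) P [set w | B i (X (t i.+1) w - X (t i) w)%R])].

Definition spec_neg_levy : Prop :=
  [/\ levy_process,
      {ae P, forall w, forall t, (0 < t)%R -> (jump t w <= 0)%R},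
      ~ {ae P, forall w, forall s t, (0 <= s <= t)%R -> (X t w <= X s w)%R} &
      (forall a : R, a != 0%R -> levy_measure [set a] = 0)].

Definition natfilt (t : R) : set (set Omega) :=
  <<s \bigcup_(s in `[0%R, t]) [set A | exists2 B, measurable B & A = X s @^-1` B] >>.

Definition stopping_time (tau : Omega -> \bar R) : Prop :=
  (forall w, 0 <= tau w) /\
  (forall t : R, (0 <= t)%R -> natfilt t [set w | tau w <= t%:E]).

(* theta under P^x : first time x + X_t <= 0 (inf of empty set = +oo) *)
Definition theta (x : R) (w : Omega) : \bar R :=
  ereal_inf [set t%:E | t in [set t : R | (0 <= t)%R /\ (x + X t w <= 0)%R]].

Definition disc (r : R) (t : \bar R) : R :=
  match t with EFin s => expR (- r * s) | _ => 0%R end.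

Definition dint (r p : R) (a b : \bar R) : \bar R :=
  \int[lebesgue_measure]_(t in [set t : R | a <= t%:E /\ t%:E <= b])
     (expR (- r * t) * p)%:E.

Definition Sset (x : R) : set (Omega -> \bar R) :=
  [set tau | stopping_time tau /\ {ae P, forall w, tau w <= theta x w}].

Definition SsetT (x T : R) : set (Omega -> \bar R) :=
  [set tau | stopping_time tau /\
             {ae P, forall w, tau w <= Order.min (theta x w) T%:E}].

Variables (r p alpha gamma : R).

Definition vfun (x : R) : \bar R :=
  ereal_sup [set \int[P]_w
     (if tau w < +oo then
        dint r p (tau w) (theta x w)
        - (if tau w < theta x w then (disc r (tau w) * gamma)%:E else 0)
        - (if tau w < theta x w then (disc r (theta x w) * alpha)%:E else 0)
      else 0) | tau in Sset x].

Definition ufun (x : R) : \bar R :=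
  ereal_sup [set \int[P]_w
     (if tau w < +oo then
        - dint r p (tau w) (theta x w)
        - (if tau w < theta x w then (disc r (tau w) * gamma)%:E else 0)
        + (if tau w < theta x w then (disc r (theta x w) * alpha)%:E else 0)
      else 0) | tau in Sset x].

Definition vbar (x T : R) : \bar R :=
  ereal_sup [set \int[P]_w
     (dint r p (tau w) (Order.min (theta x w) T%:E)
      - (if tau w < Order.min (theta x w) T%:E
         then (disc r (tau w) * gamma)%:E else 0)
      - (if (tau w < theta x w) && (theta x w < T%:E)
         then (disc r (theta x w) * alpha)%:E else 0)) | tau in SsetT x T].

Definition ubar (x T : R) : \bar R :=
  ereal_sup [set \int[P]_w
     (- dint r p (tau w) (Order.min (theta x w) T%:E)
      - (if tau w < Order.min (theta x w) T%:E
         then (disc r (tau w) * gamma)%:E else 0)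
      + (if (tau w < theta x w) && (theta x w < T%:E)
         then (disc r (theta x w) * alpha)%:E else 0)) | tau in SsetT x T].

Definition tailterm (x T : R) : \bar R :=
  \int[P]_w (if T%:E <= theta x w then dint r p T%:E (theta x w) else 0).

Definition vtilde (x T : R) : \bar R := vfun x - tailterm x T.
Definition utilde (x T : R) : \bar R := ufun x + tailterm x T.
Definition eps_v (x T : R) : \bar R := vbar x T - vtilde x T.
Definition eps_u (x T : R) : \bar R := ubar x T - utilde x T.

End Defs.

From HB Require Import structures.
From mathcomp Require Import all_boot all_order all_algebra.
From mathcomp Require Import all_classical all_reals all_analysis.
From mathcomp Require Import measurable_realfun ring lra.
Import Order.TTheory GRing.Theory Num.Theory.
Import numFieldNormedType.Exports.
Local Open Scope classical_set_scope.
Local Open Scope ring_scope.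
Set Implicit Arguments. Unset Strict Implicit. Unset Printing Implicit Defensive.

(* Truncating the horizon at T changes the payoff of a stopping rule, path by
   path, by O(e^{-rT}): the running reward earned after T, and the stopping
   cost and ruin penalty paid after T, all carry the discount factor e^{-rT}.
   Since tau |-> min tau T maps rules for the infinite horizon to rules for
   horizon T, and rules for horizon T are admissible for the infinite one, the
   two optimal values also differ by O(e^{-rT}), and so does the tail term
   E[1_{theta >= T} \int_T^theta e^{-rt} p dt].  All payoffs being bounded,
   every expectation involved is finite.  No property of the Levy process is
   needed. *)

(* None of the integrands below is known to be measurable (the stopping times
   are arbitrary), so integrals are handled through the supremum over simple
   functions that defines the integral of a nonnegative function. *)
Section bounded_integral.
Local Open Scope ereal_scope.
Context d (T : measurableType d) (R : realType) (mu : {measure set T -> \bar R}).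
Import HBNNSimple.

Lemma ge0_le_integral_nonmeas (f g : T -> \bar R) :
  (forall x, 0 <= f x) -> (forall x, f x <= g x) ->
  \int[mu]_x f x <= \int[mu]_x g x.
Proof.
move=> f0 fg; have g0 x : 0 <= g x by exact: le_trans (f0 x) (fg x).
rewrite (ge0_integralE mu (D:=setT) (fun x _ => f0 x)).
rewrite (ge0_integralE mu (D:=setT) (fun x _ => g0 x)) /=.
apply: ereal_sup_le => _ [h /= hf <-]; exists h => //= x.
by apply: le_trans (hf x) _; rewrite !patch_setT; exact: fg.
Qed.

Hypothesis mu1 : mu setT = 1.

Lemma ge0_le_integralD_cst (f g : T -> \bar R) (c : R) : (0 <= c)%R ->
  (forall x, 0 <= f x) -> (forall x, 0 <= g x) -> (forall x, f x <= g x + c%:E) ->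
  \int[mu]_x f x <= \int[mu]_x g x + c%:E.
Proof.
move=> c0 f0 g0 fg.
rewrite (ge0_integralE mu (D:=setT) (fun x _ => f0 x)) /=.
apply: ge_ereal_sup => _ [h /= hf <-].
have -> : sintegral mu h = \int[mu]_x (h x)%:E.
  by rewrite integral_nnsfun // patch_setT.
pose k x : R := Num.max (h x - c)%R 0%R.
have k0 x : 0 <= (k x)%:E by rewrite lee_fin le_max lexx orbT.
have mk : measurable_fun [set: T] (EFin \o k).
  by apply/measurable_EFinP; apply: measurable_maxr => //; exact: measurable_funB.
have kg x : (k x)%:E <= g x.
  have := hf x; rewrite patch_setT => hfx.
  rewrite /k; case: (leP (h x - c)%R 0%R) => // _.
  move: (g0 x) (fg x); case: (g x) => [gx| |] //= _ fgx; last by rewrite leey.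
  by rewrite lee_fin lerBlDr -lee_fin EFinD (le_trans hfx fgx).
apply: (@le_trans _ _ (\int[mu]_x ((k x)%:E + c%:E))).
  apply: ge0_le_integral => //.
  - by move=> x _; rewrite lee_fin fun_ge0.
  - by apply/measurable_EFinP; exact: measurable_funPT.
  - exact: emeasurable_funD.
  - by move=> x _; rewrite /= -EFinD lee_fin /k -lerBlDr le_max lexx.
rewrite ge0_integralD //; try by move=> x _; rewrite lee_fin.
by rewrite integral_cst // mu1 mule1 leeD2r ?ge0_le_integral_nonmeas.
Qed.

Lemma ge0_integral_bounded (f : T -> \bar R) (M : R) :
  (forall x, 0 <= f x <= M%:E) ->
  exists a : R, \int[mu]_x f x = a%:E /\ (0 <= a <= M)%R.
Proof.
move=> fM; have f0 x : 0 <= f x by case/andP: (fM x).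
have le_M : \int[mu]_x f x <= M%:E.
  rewrite -[M%:E]add0e -(integral0 mu setT).
  apply: ge0_le_integralD_cst => // [|x]; last by rewrite add0e; case/andP: (fM x).
  by rewrite -lee_fin (le_trans (f0 point)); case/andP: (fM point).
have ge_0 : 0 <= \int[mu]_x f x by exact: integral_ge0.
have fin : \int[mu]_x f x \is a fin_num.
  by rewrite ge0_fin_numE // (le_lt_trans le_M) ?ltry.
by exists (fine (\int[mu]_x f x)); rewrite fineK // -lee_fin -(lee_fin _ M) fineK // ge_0.
Qed.

Lemma integral_funepos_funeneg_bounded (F : T -> R) (M : R) :
  (forall x, `|F x| <= M)%R ->
  exists a b : R, [/\ \int[mu]_x (EFin \o F)^\+ x = a%:E,
    \int[mu]_x (EFin \o F)^\- x = b%:E, (0 <= a <= M)%R & (0 <= b <= M)%R].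
Proof.
move=> FM.
have [|a [-> aM]] := ge0_integral_bounded (f := (EFin \o F)^\+) (M := M).
  move=> x; rewrite funeposE /= le_max lexx orbT ge_max !lee_fin.
  by rewrite (ler_normlW (FM x)) (le_trans (normr_ge0 _) (FM x)).
have [|b [-> bM]] := ge0_integral_bounded (f := (EFin \o F)^\-) (M := M).
  move=> x; rewrite funenegE /= le_max lexx orbT ge_max !lee_fin.
  by have := FM x; rewrite -normrN => FMx; rewrite (ler_normlW FMx) (le_trans _ FMx).
by exists a, b.
Qed.

Lemma integral_bounded (F : T -> R) (M : R) : (forall x, `|F x| <= M)%R ->
  exists a : R, \int[mu]_x (F x)%:E = a%:E /\ (`|a| <= M)%R.
Proof.
move=> FM; have [a [b [Ea Eb aM bM]]] := integral_funepos_funeneg_bounded FM.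
exists (a - b)%R; rewrite integralE Ea Eb; split => //.
by move: aM bM => /andP[? ?] /andP[? ?]; rewrite ler_norml; apply/andP; split; lra.
Qed.

(* The constant doubles because [F <= G + c] is transferred separately to the
   positive and to the negative parts. *)
Lemma le_integralD_cst (F G : T -> R) (M c : R) : (0 <= c)%R ->
  (forall x, `|F x| <= M)%R -> (forall x, `|G x| <= M)%R ->
  (forall x, F x <= G x + c)%R ->
  \int[mu]_x (F x)%:E <= \int[mu]_x (G x)%:E + (c *+ 2)%:E.
Proof.
move=> c0 FM GM FG.
rewrite [X in X <= _]integralE [X in _ <= X + _]integralE.
have pos : \int[mu]_x (EFin \o F)^\+ x <= \int[mu]_x (EFin \o G)^\+ x + c%:E.
  apply: ge0_le_integralD_cst => // x; rewrite !funeposE /= -!EFin_max -EFinD lee_fin.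
  by have := FG x; case: (leP (F x) 0%R); case: (leP (G x) 0%R) => ? ? ?; lra.
have neg : \int[mu]_x (EFin \o G)^\- x <= \int[mu]_x (EFin \o F)^\- x + c%:E.
  apply: ge0_le_integralD_cst => // x; rewrite !funenegE /= -!EFin_max -EFinD lee_fin.
  by have := FG x; case: (leP (- F x)%R 0%R); case: (leP (- G x)%R 0%R) => ? ? ?; lra.
have [a [b [Ea Eb _ _]]] := integral_funepos_funeneg_bounded FM.
have [a' [b' [Ea' Eb' _ _]]] := integral_funepos_funeneg_bounded GM.
move: pos neg; rewrite /= Ea Eb Ea' Eb' -!EFinD !lee_fin mulr2n.
lra.
Qed.

End bounded_integral.

Lemma cvgy_expR_Nmul (R : realType) (r : R) : 0 < r ->
  expR (- r * x) @[x --> +oo] --> (0 : R).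
Proof.
move=> r0; rewrite (_ : (fun x => _) = (fun z => expR (- z)) \o ( *%R r)); last first.
  by apply: funext => x; rewrite /= mulNr.
apply: (@cvg_comp _ _ _ _ _ _ (pinfty_nbhs R)); last exact: cvgr_expR.
exact: gt0_cvgMry.
Qed.

Section discounted_integral.
Context (R : realType) (r p : R).
Hypothesis r0 : 0 < r.

Let rate (t : R) : R := expR (- r * t) * p.
Let primitive (t : R) : R := - (p / r) * expR (- r * t).

Let continuous_expR_Nmul : continuous (fun t : R => expR (- r * t)).
Proof.
move=> z; apply: continuous_comp; last exact: continuous_expR.
by apply: continuousM => //; exact: cst_continuous.
Qed.

Let continuous_primitive : continuous primitive.
Proof.
move=> z; apply: (@continuousM _ R^o (fun=> - (p / r)) (fun t => expR (- r * t))).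
  exact: cst_continuous.
exact: continuous_expR_Nmul.
Qed.

Let continuous_rate : continuous rate.
Proof.
move=> z; apply: (@continuousM _ R^o (fun t => expR (- r * t)) (fun=> p)).
  exact: continuous_expR_Nmul.
exact: cst_continuous.
Qed.

Let is_derive_primitive (t : R) : is_derive t 1 primitive (rate t).
Proof.
have hlin : is_derive t 1 (fun t : R => - r * t) (- r).
  by have := is_deriveZ (- r) (is_derive_id t (1:R)); rewrite /GRing.scale /= mulr1.
have := is_deriveZ (- (p / r)) (is_derive1_comp (is_derive_expR (- r * t)) hlin).
suff -> : - (p / r) *: (expR (- r * t) * - r) = rate t by [].
by rewrite /rate /GRing.scale /=; field; rewrite gt_eqF.
Qed.

Let derive1_primitive (t : R) : primitive^`()%classic t = rate t.
Proof. by rewrite derive1E; have _ := is_derive_primitive t; exact: derive_val. Qed.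

Lemma integral_discount_cc (a b : R) : a < b ->
  (\int[lebesgue_measure]_(t in `[a, b]) (rate t)%:E =
   (p / r * (expR (- r * a) - expR (- r * b)))%:E)%E.
Proof.
move=> ab; rewrite (@continuous_FTC2 _ rate primitive a b ab).
- by rewrite -EFinB /primitive; congr (_%:E); ring.
- by apply: continuous_subspaceT; exact: continuous_rate.
- split.
  + by move=> t _; have _ := is_derive_primitive t; exact: ex_derive.
  + by apply/cvg_at_right_filter; exact: continuous_primitive.
  + by apply/cvg_at_left_filter; exact: continuous_primitive.
- by move=> t _; exact: derive1_primitive.
Qed.

Lemma integral_discount_cy (a : R) : 0 <= p ->
  (\int[lebesgue_measure]_(t in `[a, +oo[) (rate t)%:E =
   (p / r * expR (- r * a))%:E)%E.
Proof.
move=> p0; rewrite (@ge0_continuous_FTC2y _ rate primitive a 0).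
- by rewrite /primitive sub0e -EFinN; congr (_%:E); ring.
- by move=> t _; rewrite /rate mulr_ge0 // expR_ge0.
- by apply: continuous_subspaceT; exact: continuous_rate.
- by have := cvgM (cvg_cst (- (p / r))) (cvgy_expR_Nmul r0); rewrite mulr0; apply.
- by move=> t _; have _ := is_derive_primitive t; exact: ex_derive.
- by apply/cvg_at_right_filter; exact: continuous_primitive.
- by move=> t _; exact: derive1_primitive.
Qed.

Definition dint_val (a b : \bar R) : R :=
  if (a <= b)%E then p / r * (disc r a - disc r b) else 0.

Lemma dintE (a b : \bar R) : 0 <= p -> (0 <= a)%E -> dint r p a b = (dint_val a b)%:E.
Proof.
rewrite /dint /dint_val => p0; case: a => [a| |] //= a0; last first.
  rewrite (_ : [set t : R | _] = set0); last first.
    by apply/seteqP; split => t //= [+ _]; rewrite leye_eq.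
  rewrite integral_set0 leye_eq; case: eqP => // ->.
  by rewrite /= subrr mulr0.
case: b => [b| |]; last first.
- rewrite (_ : [set t : R | _] = set0); last first.
    by apply/seteqP; split => t //= [_]; rewrite leeNy_eq.
  by rewrite integral_set0 leeNy_eq.
- rewrite (_ : [set t : R | _] = `[a, +oo[%classic); last first.
    apply/seteqP; split => t /=; rewrite in_itv /= andbT ?lee_fin.
      by case.
    by move=> ->; rewrite leey.
  by rewrite integral_discount_cy // leey /= subr0.
- have [ab|ba|<-] := ltgtP a b.
  + rewrite (_ : [set t : R | _] = `[a, b]%classic); last first.
      apply/seteqP; split => t /=; rewrite in_itv /= !lee_fin.
        by case => -> ->.
      by move=> /andP[-> ->].
    by rewrite integral_discount_cc // lee_fin (ltW ab).
  + rewrite (_ : [set t : R | _] = set0); last first.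
      apply/seteqP; split => t //= [].
      rewrite !lee_fin => atx tb.
      by have := lt_le_trans ba (le_trans atx tb); rewrite ltxx.
    by rewrite integral_set0 ifF // lee_fin leNgt ba.
  + rewrite (_ : [set t : R | _] = [set a]); last first.
      apply/seteqP; split => t /=; rewrite !lee_fin.
        by case => ? ?; apply/eqP; rewrite eq_le andbC; apply/andP.
      by move=> ->.
    by rewrite integral_set1 lexx subrr mulr0.
Qed.

End discounted_integral.

Section discount.
Context (R : realType) (r : R).
Hypothesis r0 : 0 < r.

Lemma disc_ge0 (t : \bar R) : 0 <= disc r t.
Proof. by case: t => [t| |] //=; rewrite expR_ge0. Qed.

Lemma disc_le1 (t : \bar R) : (0 <= t)%E -> disc r t <= 1.
Proof.
case: t => [t| |] //=; rewrite lee_fin => t0.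
by rewrite -expR0 ler_expR mulNr oppr_le0 mulr_ge0 // ltW.
Qed.

Lemma disc_le (a b : \bar R) : (0 <= a)%E -> (a <= b)%E -> disc r b <= disc r a.
Proof.
case: a => [a| |] //= a0; case: b => [b| |] //= ab; rewrite ?expR_ge0 //.
by rewrite ler_expR !mulNr lerN2 ler_pM2l // -lee_fin.
Qed.

End discount.

(* A payoff is described by the time [t] of stopping, the end [x] of the
   rewarded period, the ruin time [th] and the two events on which the
   stopping cost and the ruin penalty are paid.  The sign [s] is [1] for [v]
   and [-1] for [u], where reward and penalty trade places. *)
Section payoff.
Context (R : realType) (r p alpha gamma : R).
Hypotheses (r0 : 0 < r) (p0 : 0 <= p) (alpha0 : 0 <= alpha) (gamma0 : 0 <= gamma).

Local Notation D := (dint_val r p).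

Let pr0 : 0 <= p / r. Proof. by rewrite divr_ge0 // ltW. Qed.

Lemma dint_val_ge0 (a b : \bar R) : (0 <= a)%E -> 0 <= D a b.
Proof.
move=> a0; rewrite /dint_val; case: ifPn => // ab.
by rewrite mulr_ge0 // subr_ge0 disc_le.
Qed.

Lemma dint_val_le (a b : \bar R) : (0 <= a)%E -> D a b <= p / r * disc r a.
Proof.
move=> a0; rewrite /dint_val; case: ifPn => _; last by rewrite mulr_ge0 // disc_ge0.
by rewrite ler_wpM2l // lerBlDr lerDl disc_ge0.
Qed.

Lemma dint_valyy (b : \bar R) : D +oo b = 0.
Proof. by rewrite /dint_val leye_eq; case: eqP => // ->; rewrite /= subrr mulr0. Qed.

Lemma dint_val_truncate (t th : \bar R) (T : R) :
  (0 <= t)%E -> (0 <= th)%E -> 0 <= T ->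
  0 <= D t th - D t (Order.min th T%:E) <= p / r * disc r T%:E.
Proof.
move=> t0 th0 T0; have T0' : (0 <= T%:E)%E by rewrite lee_fin.
have eT0 := disc_ge0 r T%:E.
case: (leP th T%:E) => hth; first by rewrite subrr lexx /= mulr_ge0.
case: (leP t T%:E) => ht.
- rewrite /dint_val ht (le_trans ht (ltW hth)).
  have := disc_le r0 T0' (ltW hth); have := disc_ge0 r th; move: pr0.
  by set c := p / r => ? ? ?; apply/andP; split; nra.
- rewrite /dint_val [in X in _ - X]ifF; last by apply/negbTE; rewrite -ltNge.
  rewrite subr0 dint_val_ge0 //= (le_trans (dint_val_le th t0)) //.
  by rewrite ler_wpM2l //; exact: (disc_le r0 T0' (ltW ht)).
Qed.

Lemma stop_cost_truncate (t th : \bar R) (T : R) : (0 <= t)%E -> 0 <= T ->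
  0 <= (if (t < th)%E then disc r t * gamma else 0) -
       (if (t < Order.min th T%:E)%E then disc r t * gamma else 0) <= gamma * disc r T%:E.
Proof.
move=> t0 T0; have T0' : (0 <= T%:E)%E by rewrite lee_fin.
have eT0 := disc_ge0 r T%:E; have et0 := disc_ge0 r t.
case: (leP th T%:E) => hth; first by rewrite subrr lexx mulr_ge0.
case: (ltP t T%:E) => ht; first by rewrite (lt_trans ht hth) subrr lexx mulr_ge0.
rewrite subr0; case: ifPn => _; last by rewrite lexx mulr_ge0.
by rewrite mulr_ge0 //= mulrC ler_wpM2l //; exact: (disc_le r0 T0' ht).
Qed.

Lemma penalty_truncate (t th : \bar R) (T : R) : 0 <= T ->
  0 <= (if (t < th)%E then disc r th * alpha else 0) -
       (if (t < th)%E && (th < T%:E)%E then disc r th * alpha else 0) <= alpha * disc r T%:E.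
Proof.
move=> T0; have T0' : (0 <= T%:E)%E by rewrite lee_fin.
have eT0 := disc_ge0 r T%:E; have eth0 := disc_ge0 r th.
case: (ltP th T%:E) => hth; first by rewrite andbT subrr lexx mulr_ge0.
rewrite andbF subr0; case: ifPn => _; last by rewrite lexx mulr_ge0.
by rewrite mulr_ge0 //= mulrC ler_wpM2l //; exact: (disc_le r0 T0' hth).
Qed.

Definition payoff (s : R) (t x th : \bar R) (stopped ruined : bool) : R :=
  s * D t x - (if stopped then disc r t * gamma else 0)
  - s * (if ruined then disc r th * alpha else 0).

Definition payoff_inf (s : R) (t th : \bar R) : R :=
  payoff s t th th (t < th)%E (t < th)%E.

Definition payoff_hor (s T : R) (t th : \bar R) : R :=
  payoff s t (Order.min th T%:E) th (t < Order.min th T%:E)%E ((t < th)%E && (th < T%:E)%E).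

Definition tail_val (T : R) (th : \bar R) : R := if (T%:E <= th)%E then D T%:E th else 0.

Lemma payoff_bound s t x th b b' : (s = 1 \/ s = -1) -> (0 <= t)%E -> (0 <= th)%E ->
  `|payoff s t x th b b'| <= p / r + gamma + alpha.
Proof.
move=> s1 t0 th0; rewrite /payoff.
have := dint_val_ge0 x t0; have := dint_val_le x t0.
have := disc_le1 r0 t0; have := disc_ge0 r t.
have ept : p / r * disc r t <= p / r by rewrite -[leRHS]mulr1 ler_wpM2l // disc_le1.
have cost : 0 <= (if b then disc r t * gamma else 0) <= gamma.
  by case: b; rewrite ?lexx //= mulr_ge0 ?disc_ge0 //= ler_piMl // disc_le1.
have pen : 0 <= (if b' then disc r th * alpha else 0) <= alpha.
  by case: b'; rewrite ?lexx //= mulr_ge0 ?disc_ge0 //= ler_piMl // disc_le1.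
move: cost pen => /andP[? ?] /andP[? ?] ? ? ? ?.
by rewrite ler_norml; case: s1 => ->; apply/andP; split; lra.
Qed.

Lemma payoff_hor_close s t th T : (s = 1 \/ s = -1) ->
  (0 <= t)%E -> (0 <= th)%E -> 0 <= T ->
  `|payoff_inf s t th - payoff_hor s T t th| <= (p / r + gamma + alpha) * disc r T%:E.
Proof.
move=> s1 t0 th0 T0; rewrite /payoff_inf /payoff_hor /payoff.
have := dint_val_truncate t0 th0 T0; have := stop_cost_truncate th t0 T0.
have := penalty_truncate t th T0.
move=> /andP[? ?] /andP[? ?] /andP[? ?].
by rewrite ler_norml; case: s1 => ->; apply/andP; split; lra.
Qed.

Lemma payoff_hor_after_horizon s T t th : (T%:E < t)%E -> payoff_hor s T t th = 0.
Proof.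
move=> Tt; have minT : (Order.min th T%:E < t)%E by rewrite (le_lt_trans _ Tt) // ge_min lexx orbT.
rewrite /payoff_hor /payoff /dint_val leNgt minT ltNge (ltW minT) /= mulr0 sub0r.
rewrite ifF ?mulr0 ?subr0 ?oppr0 //; apply/negP => /andP[tth thT].
by have := lt_trans (lt_trans Tt tth) thT; rewrite ltxx.
Qed.

Lemma payoff_hor_at_horizon s T th : (s = 1 \/ s = -1) -> 0 <= T ->
  `|payoff_hor s T T%:E th| <= p / r * disc r T%:E.
Proof.
move=> s1 T0; have T0' : (0 <= T%:E)%E by rewrite lee_fin.
rewrite /payoff_hor /payoff ltNge ge_min lexx orbT /=.
rewrite ifF; last by apply/negP => /andP[tth thT]; have := lt_trans tth thT; rewrite ltxx.
have := dint_val_ge0 (Order.min th T%:E) T0'; have := dint_val_le (Order.min th T%:E) T0'.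
by rewrite /= => ? ?; rewrite ler_norml; case: s1 => ->; apply/andP; split; lra.
Qed.

Lemma payoff_hor_min_close s t th T : (s = 1 \/ s = -1) ->
  (0 <= t)%E -> (0 <= th)%E -> 0 <= T ->
  `|payoff_inf s t th - payoff_hor s T (Order.min t T%:E) th| <=
    (p / r *+ 2 + gamma + alpha) * disc r T%:E.
Proof.
move=> s1 t0 th0 T0; have eT0 := disc_ge0 r T%:E.
have close := payoff_hor_close s1 t0 th0 T0.
case: (leP t T%:E) => tT.
  by apply: le_trans close _; rewrite ler_wpM2r // mulr2n; have := pr0; lra.
rewrite payoff_hor_after_horizon // subr0 in close.
apply: le_trans (ler_normB _ _) _.
apply: le_trans (lerD close (payoff_hor_at_horizon th s1 T0)) _.
by rewrite mulr2n; lra.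
Qed.

Lemma tail_val_bound T th : 0 <= T -> 0 <= tail_val T th <= p / r * disc r T%:E.
Proof.
move=> T0; have T0' : (0 <= T%:E)%E by rewrite lee_fin.
rewrite /tail_val; case: ifPn => _; last by rewrite lexx mulr_ge0 // disc_ge0.
by rewrite dint_val_ge0 // dint_val_le.
Qed.

End payoff.

Section stopping_times.
Context (R : realType) (d : measure_display) (Omega : measurableType d)
  (P : probability Omega R) (X : R -> Omega -> R).

Lemma natfiltT t : natfilt X t setT.
Proof.
have [sigma0 sigmaC _] := smallest_sigma_algebra setT
  (\bigcup_(s in `[0, t]) [set A | exists2 B : set R, measurable B & A = X s @^-1` B]).
by have := sigmaC set0 sigma0; rewrite setD0.
Qed.

Lemma theta_ge0 x w : (0 <= theta X x w)%E.
Proof. by apply: le_ereal_inf_tmp => _ [t [t0 _] <-]; rewrite lee_fin. Qed.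

Lemma stopping_time0 : stopping_time X (fun=> 0%E).
Proof.
split => // t t0; rewrite (_ : [set w | _] = setT); first exact: natfiltT.
by apply/seteqP; split => w //= _; rewrite lee_fin.
Qed.

Lemma stopping_time_min tau (T : R) : 0 <= T -> stopping_time X tau ->
  stopping_time X (fun w => Order.min (tau w) T%:E).
Proof.
move=> T0 [tau0 tauF]; split => [w|t t0]; first by rewrite le_min tau0 lee_fin T0.
have [Tt|tT] := leP T t.
  rewrite (_ : [set w | _] = setT); first exact: natfiltT.
  by apply/seteqP; split => w //= _; rewrite ge_min lee_fin Tt orbT.
rewrite (_ : [set w | _] = [set w | (tau w <= t%:E)%E]); first exact: tauF.
apply/seteqP; split => w /=; rewrite ge_min; last by move=> ->.
by case/orP => //; rewrite lee_fin leNgt tT.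
Qed.

Lemma SsetT_sub x T : SsetT P X x T `<=` Sset P X x.
Proof.
move=> tau [st ae]; split => //; apply: filterS ae => w h.
by apply: le_trans h _; rewrite ge_min lexx.
Qed.

Lemma SsetT_min x T tau : 0 <= T -> Sset P X x tau ->
  SsetT P X x T (fun w => Order.min (tau w) T%:E).
Proof.
move=> T0 [st ae]; split; first exact: stopping_time_min.
by apply: filterS ae => w h; rewrite le_min !ge_min lexx orbT andbT h.
Qed.

Lemma SsetT0 x T : 0 <= T -> SsetT P X x T (fun=> 0%E).
Proof.
split; first exact: stopping_time0.
by apply: aeW => w; rewrite le_min theta_ge0 lee_fin.
Qed.

End stopping_times.

Section integrands.
Context (R : realType) (r p alpha gamma : R).
Hypotheses (r0 : 0 < r) (p0 : 0 <= p).
Local Open Scope ereal_scope.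

Lemma v_integrandE t th : 0 <= t ->
  (if t < +oo then
     dint r p t th
     - (if t < th then (disc r t * gamma)%:E else 0)
     - (if t < th then (disc r th * alpha)%:E else 0)
   else 0) = (payoff_inf r p alpha gamma 1 t th)%:E.
Proof.
move=> t0; rewrite dintE // /payoff_inf /payoff.
case: t t0 => [t| |] //= t0; last by rewrite dint_valyy ltNge leey /= !mulr0 !subr0.
by rewrite ltry !mul1r; case: ifPn => _; rewrite ?subr0 ?sube0 -?EFinB.
Qed.

Lemma u_integrandE t th : 0 <= t ->
  (if t < +oo then
     - dint r p t th
     - (if t < th then (disc r t * gamma)%:E else 0)
     + (if t < th then (disc r th * alpha)%:E else 0)
   else 0) = (payoff_inf r p alpha gamma (-1) t th)%:E.
Proof.
move=> t0; rewrite dintE // /payoff_inf /payoff.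
case: t t0 => [t| |] //= t0; last by rewrite dint_valyy ltNge leey /= !mulr0 !subr0.
rewrite ltry !mulN1r; case: ifPn => _; first by rewrite -EFinN -!EFinB -EFinD opprK.
by rewrite oppr0 !subr0 sube0 adde0 addr0.
Qed.

Lemma vbar_integrandE (T : R) t th : 0 <= t ->
  dint r p t (Order.min th T%:E)
  - (if t < Order.min th T%:E then (disc r t * gamma)%:E else 0)
  - (if (t < th) && (th < T%:E) then (disc r th * alpha)%:E else 0)
  = (payoff_hor r p alpha gamma 1 T t th)%:E.
Proof.
move=> t0; rewrite dintE // /payoff_hor /payoff !mul1r.
by case: ifPn => _; case: ifPn => _; rewrite ?subr0 ?sube0 -?EFinB.
Qed.

Lemma ubar_integrandE (T : R) t th : 0 <= t ->
  - dint r p t (Order.min th T%:E)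
  - (if t < Order.min th T%:E then (disc r t * gamma)%:E else 0)
  + (if (t < th) && (th < T%:E) then (disc r th * alpha)%:E else 0)
  = (payoff_hor r p alpha gamma (-1) T t th)%:E.
Proof.
move=> t0; rewrite dintE // /payoff_hor /payoff !mulN1r opprK.
by case: ifPn => _; case: ifPn => _;
  rewrite ?oppr0 ?subr0 ?sube0 ?adde0 ?addr0 -?EFinN -?EFinB -?EFinD.
Qed.

Lemma tail_integrandE (T : R) th : (0 <= T)%R ->
  (if T%:E <= th then dint r p T%:E th else 0) = (tail_val r p T th)%:E.
Proof. by move=> T0; rewrite /tail_val; case: ifPn => // _; rewrite dintE. Qed.

End integrands.

Lemma ereal_sup_close (R : realType) (U : Type) (A B : set U) (I J : U -> \bar R)
    (m : U -> U) (K del : R) (u0 : U) :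
  B u0 -> B `<=` A -> (forall u, A u -> B (m u)) ->
  (forall u, A u -> exists a : R, I u = a%:E /\ `|a| <= K) ->
  (forall u, B u -> exists a : R, J u = a%:E /\ `|a| <= K) ->
  (forall u, A u -> (I u <= J (m u) + del%:E)%E) ->
  (forall u, B u -> (J u <= I u + del%:E)%E) ->
  exists a b : R, [/\ ereal_sup (I @` A) = a%:E, ereal_sup (J @` B) = b%:E &
    `|a - b| <= del].
Proof.
move=> Bu0 BA mB IK JK IJ JI.
have sup_fin (V : set U) (H : U -> \bar R) : V u0 ->
    (forall u, V u -> exists a : R, H u = a%:E /\ `|a| <= K) ->
    ereal_sup (H @` V) \is a fin_num.
  move=> Vu0 HK; rewrite fin_numE -ltey -ltNye; apply/andP; split.
    apply: lt_le_trans (ereal_sup_ubound (ex_intro2 _ _ u0 Vu0 erefl)).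
    by have [a [-> _]] := HK u0 Vu0; exact: ltNyr.
  apply: le_lt_trans (ltry K); apply: ge_ereal_sup => _ [u Vu <-].
  by have [a [-> ha]] := HK u Vu; rewrite lee_fin (le_trans (ler_norm _)).
have finI := sup_fin A I (BA _ Bu0) IK; have finJ := sup_fin B J Bu0 JK.
have JleI : (ereal_sup (J @` B) <= ereal_sup (I @` A) + del%:E)%E.
  apply: ge_ereal_sup => _ [u Bu <-]; apply: le_trans (JI u Bu) _.
  by rewrite leeD2r // ereal_sup_ubound //; exists u => //; exact: BA.
have IleJ : (ereal_sup (I @` A) <= ereal_sup (J @` B) + del%:E)%E.
  apply: ge_ereal_sup => _ [u Au <-]; apply: le_trans (IJ u Au) _.
  by rewrite leeD2r // ereal_sup_ubound //; exists (m u) => //; exact: mB.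
exists (fine (ereal_sup (I @` A))), (fine (ereal_sup (J @` B))); rewrite !fineK //.
move: JleI IleJ; rewrite -(fineK finI) -(fineK finJ) -!EFinD !lee_fin => ? ?.
by split => //; rewrite ler_norml; apply/andP; split; lra.
Qed.

Lemma cvge_expR_rate (R : realType) (f : R -> \bar R) (l C r : R) : 0 < r ->
  (forall T, 0 <= T -> exists y, f T = y%:E /\ `|l - y| <= C * expR (- r * T)) ->
  f T @[T --> +oo] --> l%:E.
Proof.
move=> r0 hf; apply/fine_cvgP; split.
  near=> T; have [|y [-> //]] := hf T.
  by near: T; exact: nbhs_pinfty_ge.
have Cexp : C * expR (- r * T) @[T --> +oo] --> (0 : R).
  by have := cvgM (cvg_cst C) (cvgy_expR_Nmul r0); rewrite mulr0; apply.
apply/cvgrPdist_le => eps eps0; move/cvgrPdist_le/(_ eps eps0): Cexp => Cexp.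
near=> T; have [|y [fy ly]] := hf T; last first.
  rewrite /= fy /=; apply: le_trans ly (le_trans (ler_norm _) _).
  by have := near Cexp T; rewrite sub0r normrN; apply.
by near: T; exact: nbhs_pinfty_ge.
Unshelve. all: by end_near.
Qed.

Section truncation.
Context (R : realType) (d : measure_display) (Omega : measurableType d)
  (P : probability Omega R) (X : R -> Omega -> R) (r p alpha gamma x : R).
Hypotheses (r0 : 0 < r) (p0 : 0 <= p) (alpha0 : 0 <= alpha) (gamma0 : 0 <= gamma).

Definition value_inf (s : R) : \bar R :=
  ereal_sup [set (\int[P]_w (payoff_inf r p alpha gamma s (tau w) (theta X x w))%:E)%E
            | tau in Sset P X x].

Definition value_hor (s T : R) : \bar R :=
  ereal_sup [set (\int[P]_w (payoff_hor r p alpha gamma s T (tau w) (theta X x w))%:E)%E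
            | tau in SsetT P X x T].

Let pr0 : 0 <= p / r. Proof. by rewrite divr_ge0 // ltW. Qed.
Let K := p / r + gamma + alpha.

Let payoff_inf_bound s t w : (s = 1 \/ s = -1) -> (0 <= t)%E ->
  `|payoff_inf r p alpha gamma s t (theta X x w)| <= K.
Proof. by move=> s1 t0; exact: payoff_bound (theta_ge0 _ _ _). Qed.

Let payoff_hor_bound s T t w : (s = 1 \/ s = -1) -> (0 <= t)%E ->
  `|payoff_hor r p alpha gamma s T t (theta X x w)| <= K.
Proof. by move=> s1 t0; exact: payoff_bound (theta_ge0 _ _ _). Qed.

Lemma value_hor_close s T : (s = 1 \/ s = -1) -> 0 <= T ->
  exists a b : R, [/\ value_inf s = a%:E, value_hor s T = b%:E &
    `|a - b| <= (p / r *+ 2 + gamma + alpha) * expR (- r * T) *+ 2].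
Proof.
move=> s1 T0; have mu1 := probability_setT P.
have eT0 : 0 <= (p / r *+ 2 + gamma + alpha) * disc r T%:E.
  by rewrite mulr_ge0 ?disc_ge0 // !addr_ge0 ?mulrn_wge0.
apply: (@ereal_sup_close _ _ _ _ _ _ (fun tau w => Order.min (tau w) T%:E) K).
- exact: SsetT0.
- exact: SsetT_sub.
- by move=> tau; exact: SsetT_min.
- by move=> tau [[tau0 _] _]; apply: (integral_bounded mu1) => w; exact: payoff_inf_bound.
- by move=> tau [[tau0 _] _]; apply: (integral_bounded mu1) => w; exact: payoff_hor_bound.
- move=> tau [[tau0 _] _]; apply: (le_integralD_cst mu1 eT0) => w.
  + exact: payoff_inf_bound.
  + by apply: payoff_hor_bound; rewrite // le_min tau0 lee_fin.
  + have := payoff_hor_min_close r0 p0 alpha0 gamma0 s1 (tau0 w) (theta_ge0 X x w) T0.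
    by rewrite ler_norml => /andP[_ ?]; lra.
- move=> tau [[tau0 _] _]; apply: (le_integralD_cst mu1 eT0) => w.
  + exact: payoff_hor_bound.
  + exact: payoff_inf_bound.
  + have := payoff_hor_close r0 p0 alpha0 gamma0 s1 (tau0 w) (theta_ge0 X x w) T0.
    rewrite ler_norml mulr2n => /andP[? _].
    by have := disc_ge0 r T%:E; have := pr0; nra.
Qed.

Lemma value_hor_cvg s : (s = 1 \/ s = -1) -> value_hor s T @[T --> +oo] --> value_inf s.
Proof.
move=> s1; have [a [_ [ea _ _]]] := value_hor_close s1 (lexx 0).
rewrite ea; apply: (cvge_expR_rate (C := (p / r *+ 2 + gamma + alpha) *+ 2) r0) => T T0.
have [a' [b [ea' -> ab]]] := value_hor_close s1 T0.
by move: ea'; rewrite ea => -[->]; exists b; rewrite mulrnAl.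
Qed.

Lemma value_inf_fin_num s : (s = 1 \/ s = -1) -> value_inf s \is a fin_num.
Proof. by move=> s1; have [a [_ [-> _ _]]] := value_hor_close s1 (lexx 0). Qed.

Lemma tailterm_cvg0 : tailterm P X r p x T @[T --> +oo] --> 0%E.
Proof.
apply: (cvge_expR_rate (C := p / r) r0) => T T0.
have [|t [tE /andP[t0 tT]]] := ge0_integral_bounded (probability_setT P)
  (f := fun w => (tail_val r p T (theta X x w))%:E) (M := p / r * expR (- r * T)).
  by move=> w; rewrite !lee_fin; exact: (tail_val_bound r0 p0 (theta X x w) T0).
exists t; rewrite sub0r normrN ger0_norm //; split => //.
by rewrite /tailterm -tE; apply: eq_integral => w _; rewrite tail_integrandE.
Qed.

Lemma vfunE : vfun P X r p alpha gamma x = value_inf 1.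
Proof.
congr ereal_sup; apply: eq_imagel => tau [[tau0 _] _].
by apply: eq_integral => w _; rewrite v_integrandE.
Qed.

Lemma ufunE : ufun P X r p alpha gamma x = value_inf (-1).
Proof.
congr ereal_sup; apply: eq_imagel => tau [[tau0 _] _].
by apply: eq_integral => w _; rewrite u_integrandE.
Qed.

Lemma vbarE T : vbar P X r p alpha gamma x T = value_hor 1 T.
Proof.
congr ereal_sup; apply: eq_imagel => tau [[tau0 _] _].
by apply: eq_integral => w _; rewrite vbar_integrandE.
Qed.

Lemma ubarE T : ubar P X r p alpha gamma x T = value_hor (-1) T.
Proof.
congr ereal_sup; apply: eq_imagel => tau [[tau0 _] _].
by apply: eq_integral => w _; rewrite ubar_integrandE.
Qed.

End truncation.

Unset Implicit Arguments.
Theorem proposition5p4 (R : realType) (d : measure_display)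
  (Omega : measurableType d) (P : probability Omega R) (X : R -> Omega -> R)
  (r p alpha gamma : R) :
  spec_neg_levy P X -> 0 < r ->
  (\int[P]_w (expR (X 1 w))%:E = (expR r)%:E)%E ->
  0 < p -> 0 < alpha -> 0 <= gamma ->
  forall x : R, 0 < x ->
  [/\ (eps_v P X r p alpha gamma x T @[T --> +oo] --> 0%E) /\
      (eps_u P X r p alpha gamma x T @[T --> +oo] --> 0%E),
      (vbar P X r p alpha gamma x T @[T --> +oo] --> vfun P X r p alpha gamma x) /\
      (vtilde P X r p alpha gamma x T @[T --> +oo] --> vfun P X r p alpha gamma x) &
      (ubar P X r p alpha gamma x T @[T --> +oo] --> ufun P X r p alpha gamma x) /\
      (utilde P X r p alpha gamma x T @[T --> +oo] --> ufun P X r p alpha gamma x)].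
Proof.
move=> _ r0 _ /ltW p0 /ltW alpha0 gamma0 x _.
have sgn1 : (1 : R) = 1 \/ (1 : R) = -1 by left.
have sgnN1 : (-1 : R) = 1 \/ (-1 : R) = -1 by right.
have vbar_cvg : vbar P X r p alpha gamma x T @[T --> +oo] --> vfun P X r p alpha gamma x.
  by under eq_fun do rewrite vbarE //; rewrite vfunE //; exact: value_hor_cvg.
have ubar_cvg : ubar P X r p alpha gamma x T @[T --> +oo] --> ufun P X r p alpha gamma x.
  by under eq_fun do rewrite ubarE //; rewrite ufunE //; exact: value_hor_cvg.
have vfin : vfun P X r p alpha gamma x \is a fin_num.
  by rewrite vfunE //; exact: value_inf_fin_num.
have ufin : ufun P X r p alpha gamma x \is a fin_num.
  by rewrite ufunE //; exact: value_inf_fin_num.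
have tail_cvg := tailterm_cvg0 P X x r0 p0.
have vtilde_cvg : vtilde P X r p alpha gamma x T @[T --> +oo] --> vfun P X r p alpha gamma x.
  rewrite /vtilde -[X in _ --> X]sube0.
  by apply: (cvgeB _ (cvg_cst _) tail_cvg); exact: fin_num_adde_defr.
have utilde_cvg : utilde P X r p alpha gamma x T @[T --> +oo] --> ufun P X r p alpha gamma x.
  rewrite /utilde -[X in _ --> X]adde0.
  by apply: (cvgeD _ (cvg_cst _) tail_cvg); exact: fin_num_adde_defr.
split; split => //.
- by rewrite /eps_v -(subee vfin); apply: cvgeB => //; rewrite fin_num_adde_defl ?fin_numN.
- by rewrite /eps_u -(subee ufin); apply: cvgeB => //; rewrite fin_num_adde_defl ?fin_numN.
Qed.
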